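(* Let $d\geq 2$, energies $E_1\leq\dots\leq E_d$, inverse temperatures $\alpha>\beta\geq 0$, and $\gamma_k=e^{-\alpha E_k}/\sum_i e^{-\alpha E_i}$, $\Gamma_k=e^{-\beta E_k}/\sum_i e^{-\beta E_i}$. Define $$\tilde{\gamma}_1=\frac{\Gamma_1(\gamma_1-\gamma_d)}{\Gamma_1(1-\gamma_d)-\Gamma_d(1-\gamma_1)},\qquad \tilde{\Gamma}_d=\frac{\Gamma_d(\gamma_1-\gamma_d)}{\Gamma_1(1-\gamma_d)-\Gamma_d(1-\gamma_1)}.$$ For $d$-dimensional probability distributions $\mathbf{p}$ and $\mathbf{q}$ satisfying $\Gamma_d\leq p_d\leq\tilde{\Gamma}_d$ and $\gamma_1\leq q_1\leq\tilde{\gamma}_1$, there exist probability distributions $\mathbf{p}',\mathbf{p}'',\mathbf{q}',\mathbf{q}''$ such that $$\mathbf{p}\succ_{\boldsymbol{\gamma}}\mathbf{p}'\succ_{\boldsymbol{\Gamma}}\mathbf{p}'',\qquad \mathbf{q}\succ_{\boldsymbol{\Gamma}}\mathbf{q}'\succ_{\boldsymbol{\gamma}}\mathbf{q}'',$$ and $$p_d''=\frac{(1-\gamma_1)\Gamma_d}{(1-\gamma_d)\Gamma_1}p_d+\frac{(\gamma_1-\gamma_d)\Gamma_d}{(1-\gamma_d)\Gamma_1},\qquad q_1''=\frac{(1-\gamma_1)\Gamma_d}{(1-\gamma_d)\Gamma_1}q_1+\frac{\gamma_1-\gamma_d}{1-\gamma_d},$$ so that $p_d\leq p_d''\leq\tilde{\Gamma}_d$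 and $q_1\leq q_1''\leq\tilde{\gamma}_1$.
   Context: For a full-support probability vector $\mathbf{g}$, $\mathbf{p}\succ_{\mathbf{g}}\mathbf{q}$ (thermomajorisation) means: ordering indices by a permutation $\pi$ with $p_{\pi_i}/g_{\pi_i}$ non-increasing in $i$, the piecewise linear curve through the points $\left(\sum_{i\leq j}g_{\pi_i},\sum_{i\leq j}p_{\pi_i}\right)$, $j=0,\dots,d$, is nowhere below the analogous curve of $\mathbf{q}$. *)

From HB Require Import structures.
From mathcomp Require Import all_boot all_order all_algebra fingroup perm.
From mathcomp Require Import all_classical all_reals.
From mathcomp Require Import sequences exp.
Set Implicit Arguments. Unset Strict Implicit. Unset Printing Implicit Defensive.
Import Order.TTheory GRing.Theory Num.Theory.
Local Open Scope ring_scope.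

Section Thermo.
Variables (R : realType) (d : nat).

Definition gibbs (b : R) (E : 'I_d -> R) : 'I_d -> R :=
  fun k => expR (- (b * E k)) / \sum_(i < d) expR (- (b * E i)).

Definition prob_dist (p : 'I_d -> R) : Prop :=
  (forall i, 0 <= p i) /\ \sum_(i < d) p i = 1.

Definition gorder (g p : 'I_d -> R) (pi : 'S_d) : Prop :=
  forall i j : 'I_d, (i <= j)%N -> p (pi j) / g (pi j) <= p (pi i) / g (pi i).

Definition xpt (g : 'I_d -> R) (pi : 'S_d) (k : nat) : R :=
  \sum_(i < d | (i < k)%N) g (pi i).

(* The piecewise linear curve through the points
   (sum_(i<=j) g_(pi i), sum_(i<=j) p_(pi i)), j = 0..d, evaluated at x in
   [0,1]: the i-th segment has horizontal extent g_(pi i) starting at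
   xpt g pi i and slope p_(pi i)/g_(pi i); the value at x is the sum of the
   contributions of the part of each segment lying to the left of x. *)
Definition curve (g p : 'I_d -> R) (pi : 'S_d) (x : R) : R :=
  \sum_(i < d) p (pi i) / g (pi i) *
     Num.min (Num.max (x - xpt g pi i) 0) (g (pi i)).

(* Thermomajorisation p >_g q : the thermomajorisation curve of p is nowhere
   below that of q (for any admissible orderings pi, sigma; the curves do
   not depend on that choice). *)
Definition thermomaj (g p q : 'I_d -> R) : Prop :=
  forall pi sigma : 'S_d, gorder g p pi -> gorder g q sigma ->
    forall x : R, 0 <= x <= 1 -> curve g q sigma x <= curve g p pi x.

End Thermo.

From HB Require Import structures.
From mathcomp Require Import all_boot all_order all_algebra fingroup perm.
From mathcomp Require Import all_classical all_reals.
From mathcomp Require Import sequences exp.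
From mathcomp Require Import ring lra.
Import Order.TTheory GRing.Theory Num.Theory.
Local Open Scope ring_scope.

(* A stochastic matrix M with M g = g never raises the g-thermomajorisation
   curve: at abscissa x the curve of p is the maximum of sum_i t_i p_i over
   weights t in [0,1]^d with sum_i t_i g_i = x (attained by filling the levels
   in order of decreasing p_i / g_i), and the transpose of M maps admissible
   weights for M p to admissible weights for p.  Two such maps suffice: for
   gamma, send level d to level 1 and replace every other level by
   (gamma - gamma_d e_1) / (1 - gamma_d); for Gamma, move the fraction
   Gamma_d / Gamma_1 of level 1 to level d and all of level d to level 1.
   Composed in either order they act on p_d, resp. q_1, as affine maps with
   slope in [0, 1) whose fixed points are tGamma_d and tgamma_1. *)

Section Thermomajorisation.
Context {R : realType} {n : nat}.
Local Notation d := n.+1.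
Implicit Types (g p q t : 'I_d -> R) (pi sigma : 'S_d) (M : 'I_d -> 'I_d -> R).

Lemma big_ord_lt0 (F : 'I_d -> R) : \sum_(i < d | (i < 0)%N) F i = 0.
Proof. by rewrite big_pred0 // => i; rewrite ltn0. Qed.

Lemma big_ord_ltS {k} (hk : (k < d)%N) (F : 'I_d -> R) :
  \sum_(i < d | (i < k.+1)%N) F i = \sum_(i < d | (i < k)%N) F i + F (Ordinal hk).
Proof.
rewrite (bigD1 (Ordinal hk)) /= ?ltnSn // addrC; congr (_ + _).
by apply: eq_bigl => i; rewrite ltnS ltn_neqAle andbC.
Qed.

Lemma big_ord_lt_all (F : 'I_d -> R) : \sum_(i < d | (i < d)%N) F i = \sum_i F i.
Proof. by apply: eq_bigl => i; rewrite ltn_ord. Qed.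

Lemma reindex_perm pi (F : 'I_d -> R) : \sum_i F (pi i) = \sum_i F i.
Proof. by rewrite [RHS](reindex_inj (@perm_inj _ pi)). Qed.

Lemma xptS g pi {k} (hk : (k < d)%N) : xpt g pi k.+1 = xpt g pi k + g (pi (Ordinal hk)).
Proof. exact: big_ord_ltS. Qed.

Lemma xpt_last g pi : xpt g pi d = \sum_i g i.
Proof. by rewrite /xpt big_ord_lt_all reindex_perm. Qed.

Definition overlap g pi (x : R) (i : 'I_d) : R :=
  Num.min (Num.max (x - xpt g pi i) 0) (g (pi i)).

Lemma clip_telescope (x X a : R) : 0 <= a ->
  Num.min (Num.max (x - X) 0) a = Num.min x (X + a) - Num.min x X.
Proof.
move=> ha; case: (lerP x X) => h1.
  rewrite (max_r (_ : x - X <= 0)); last lra.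
  by rewrite (min_l ha) (min_l (_ : x <= X + a)); lra.
rewrite (max_l (_ : 0 <= x - X)); last lra.
case: (lerP x (X + a)) => h2.
  by rewrite (min_l (_ : x - X <= a)); lra.
by rewrite (min_r (_ : a <= x - X)); lra.
Qed.

Lemma sum_overlap_prefix g pi x k : (forall i, 0 <= g i) -> 0 <= x -> (k <= d)%N ->
  \sum_(i < d | (i < k)%N) overlap g pi x i = Num.min x (xpt g pi k).
Proof.
move=> hg hx; elim: k => [|k IH] hk.
  by rewrite big_ord_lt0 /xpt big_ord_lt0 min_r.
rewrite (big_ord_ltS hk) IH ?(ltnW hk) // (xptS _ _ hk) /overlap.
by rewrite clip_telescope // addrCA subrr addr0.
Qed.

Lemma overlap_ge0 g pi x i : 0 <= g (pi i) -> 0 <= overlap g pi x i <= g (pi i).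
Proof. by move=> hg; rewrite /overlap le_min ge_min le_max lexx hg lexx !orbT. Qed.

Lemma curve_weighted_sum g q sigma x :
  (forall i, 0 < g i) -> \sum_i g i = 1 -> 0 <= x <= 1 ->
  exists2 t, forall i, 0 <= t i <= 1 &
    \sum_i t i * g i = x /\ curve g q sigma x = \sum_i t i * q i.
Proof.
move=> hg hs /andP[hx0 hx1].
have hg0 i : 0 <= g i by apply/ltW.
exists (fun i => overlap g sigma x ((sigma^-1)%g i) / g i).
  move=> i; have := overlap_ge0 g sigma x ((sigma^-1)%g i) (hg0 _).
  rewrite permKV => /andP[h0 h1].
  by rewrite divr_ge0 //= ler_pdivrMr // mul1r.
split.
  rewrite -(reindex_perm sigma).
  under eq_bigr => i _ do rewrite permK divfK ?gt_eqF //.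
  by rewrite -big_ord_lt_all sum_overlap_prefix // xpt_last hs min_l.
rewrite /curve -(reindex_perm sigma (fun i => _ / g i * q i)).
by apply: eq_bigr => i _; rewrite permK mulrC mulrA mulrAC.
Qed.

Lemma abel_prefix_le (c w : 'I_d -> R) (y : R) k : (k <= d)%N ->
  (forall i j : 'I_d, (i <= j)%N -> c j <= c i) ->
  (forall l, (l <= k)%N -> \sum_(i < d | (i < l)%N) w i <= 0) ->
  (forall i : 'I_d, (i < k)%N -> y <= c i) ->
  \sum_(i < d | (i < k)%N) c i * w i <= y * \sum_(i < d | (i < k)%N) w i.
Proof.
elim: k y => [|k IH] y hk hc hw hy; first by rewrite !big_ord_lt0 mulr0.
have IHk := IH (c (Ordinal hk)) (ltnW hk) hc (fun l hl => hw l (leqW hl))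
  (fun i hi => hc i (Ordinal hk) (ltnW hi)).
have hyk : y <= c (Ordinal hk) := hy (Ordinal hk) (ltnSn k).
have := hw k.+1 (leqnn _); rewrite !(big_ord_ltS hk) => hwk.
nra.
Qed.

Lemma weighted_sum_le_curve g p pi x t :
  (forall i, 0 < g i) -> \sum_i g i = 1 -> gorder g p pi -> 0 <= x <= 1 ->
  (forall i, 0 <= t i <= 1) -> \sum_i t i * g i = x ->
  \sum_i t i * p i <= curve g p pi x.
Proof.
move=> hg hs hpi /andP[hx0 hx1] ht htg.
have hg0 i : 0 <= g i by apply/ltW.
(* Abel summation: the deficits w of t against the greedy filling have
   nonpositive prefix sums and total 0, and the slopes c are nonincreasing. *)
pose w i := t (pi i) * g (pi i) - overlap g pi x i.
have hw l : (l <= d)%N -> \sum_(i < d | (i < l)%N) w i <= 0.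
  move=> hl; rewrite sumrB sum_overlap_prefix // subr_le0 le_min; apply/andP; split.
  - rewrite -htg -(reindex_perm pi (fun i => t i * g i)) [leLHS]big_mkcond /=.
    apply: ler_sum => i _; case: ifP => // _.
    by have /andP[h0 _] := ht (pi i); apply: mulr_ge0.
  - by apply: ler_sum => i _; have /andP[_ h1] := ht (pi i); apply: ler_piMl.
have hw_all : \sum_(i < d | (i < d)%N) w i = 0.
  rewrite sumrB sum_overlap_prefix // xpt_last hs min_l //.
  by rewrite big_ord_lt_all (reindex_perm pi (fun i => t i * g i)) htg subrr.
pose c i := p (pi i) / g (pi i).
have := abel_prefix_le c w (c ord_max) d (leqnn d) hpi hw
  (fun i _ => hpi i ord_max (leq_ord i)).
rewrite hw_all mulr0 big_ord_lt_all => hcw.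
have -> : \sum_i t i * p i = curve g p pi x + \sum_i c i * w i.
  rewrite -(reindex_perm pi (fun i => t i * p i)) /curve -big_split.
  by apply: eq_bigr => i _ /=; rewrite /c /w /overlap; field; rewrite gt_eqF.
lra.
Qed.

Definition transform M p : 'I_d -> R := fun i => \sum_j M i j * p j.

Definition stochastic M := (forall i j, 0 <= M i j) /\ (forall j, \sum_i M i j = 1).

Definition gibbs_preserving g M := stochastic M /\ forall i, transform M g i = g i.

Lemma stochastic_prob_dist {M p} :
  stochastic M -> prob_dist p -> prob_dist (transform M p).
Proof.
move=> [hM0 hM1] [hp0 hp1]; split.
  by move=> i; apply: sumr_ge0 => j _; apply: mulr_ge0.
rewrite exchange_big /= -hp1; apply: eq_bigr => j _.
by rewrite -mulr_suml hM1 mul1r.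
Qed.

Lemma gibbs_preserving_thermomaj g M p : (forall i, 0 < g i) -> \sum_i g i = 1 ->
  gibbs_preserving g M -> thermomaj g p (transform M p).
Proof.
move=> hg hs [[hM0 hM1] hMg] pi sigma hpi _ x hx.
have [t ht [htg ->]] := curve_weighted_sum g (transform M p) sigma x hg hs hx.
pose s j := \sum_i t i * M i j.
have -> : \sum_i t i * transform M p i = \sum_j s j * p j.
  rewrite /s; under eq_bigr => i _ do rewrite mulr_sumr.
  rewrite exchange_big /=; apply: eq_bigr => j _; rewrite mulr_suml.
  by apply: eq_bigr => i _; rewrite mulrA.
apply: (weighted_sum_le_curve g p pi x s hg hs hpi hx).
- move=> j; apply/andP; split.
    by apply: sumr_ge0 => i _; have /andP[h0 _] := ht i; apply: mulr_ge0.
  rewrite -(hM1 j); apply: ler_sum => i _.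
  by have /andP[_ h1] := ht i; apply: ler_piMl.
- rewrite -htg /s; under eq_bigr => j _ do rewrite mulr_suml.
  rewrite exchange_big /=; apply: eq_bigr => i _; rewrite -hMg mulr_sumr.
  by apply: eq_bigr => j _; rewrite mulrA.
Qed.

Definition dirac (k : 'I_d) : 'I_d -> R := fun i => (i == k)%:R.

Lemma dirac_id k : dirac k k = 1.
Proof. by rewrite /dirac eqxx. Qed.

Lemma dirac_neq {k i} : i != k -> dirac k i = 0.
Proof. by rewrite /dirac => /negbTE ->. Qed.

Lemma diracC i j : dirac i j = dirac j i.
Proof. by rewrite /dirac eq_sym. Qed.

Lemma dirac_ge0 k i : 0 <= dirac k i.
Proof. exact: ler0n. Qed.

Lemma dirac_le1 k i : dirac k i <= 1.
Proof. by rewrite /dirac lern1 leq_b1. Qed.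

Lemma sum_dirac_mull k (F : 'I_d -> R) : \sum_j dirac k j * F j = F k.
Proof.
rewrite (bigD1 k) //= dirac_id mul1r big1 ?addr0 // => j hj.
by rewrite dirac_neq ?mul0r.
Qed.

Lemma sum_dirac k : \sum_i dirac k i = 1.
Proof.
by rewrite -[RHS](sum_dirac_mull k (fun=> 1)); apply: eq_bigr => i _; rewrite mulr1.
Qed.

(* Column [a] is the point mass at [b]; every other column is the distribution
   [(g - g_a dirac_b) / (1 - g_a)], which is what makes [g] a fixed point. *)
Definition relax_mx g (a b : 'I_d) : 'I_d -> 'I_d -> R := fun i j =>
  dirac a j * dirac b i + (1 - dirac a j) * ((g i - g a * dirac b i) / (1 - g a)).

Lemma transform_relax g a b f i :
  transform (relax_mx g a b) f i =
  dirac b i * f a + (g i - g a * dirac b i) / (1 - g a) * (\sum_j f j - f a).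
Proof.
set v := (g i - g a * dirac b i) / (1 - g a).
have e j : relax_mx g a b i j * f j = (dirac b i - v) * (dirac a j * f j) + v * f j.
  by rewrite /relax_mx -/v; ring.
rewrite /transform (eq_bigr _ (fun j _ => e j)) big_split /= -!mulr_sumr.
by rewrite sum_dirac_mull; ring.
Qed.

Lemma relax_gibbs_preserving g a b : (forall i, 0 <= g i) -> \sum_i g i = 1 ->
  g a <= g b -> g a < 1 -> gibbs_preserving g (relax_mx g a b).
Proof.
move=> hg hs hab ha1.
have hv i : 0 <= (g i - g a * dirac b i) / (1 - g a).
  rewrite divr_ge0 ?subr_ge0 ?(ltW ha1) //.
  have [->|hib] := eqVneq i b; first by rewrite dirac_id mulr1.
  by rewrite dirac_neq // mulr0 hg.
split; [split|].
- move=> i j; apply: addr_ge0; first exact: mulr_ge0 (dirac_ge0 _ _) (dirac_ge0 _ _).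
  by apply: mulr_ge0 (hv i); rewrite subr_ge0 dirac_le1.
- move=> j; rewrite big_split /= -!mulr_sumr sum_dirac -mulr_suml sumrB.
  rewrite -mulr_sumr sum_dirac hs !mulr1 divff ?subr_eq0 ?(gt_eqF ha1) //; ring.
- move=> i; rewrite transform_relax hs; field.
  by rewrite subr_eq0 (gt_eqF ha1).
Qed.

(* The identity away from levels [a] and [b]; on them, the column-stochastic
   block [[1 - r, 1], [r, 0]] with [r = g_b / g_a]. *)
Definition swap_mx g (a b : 'I_d) : 'I_d -> 'I_d -> R := fun i j =>
  dirac j i + dirac a j * (g b / g a * (dirac b i - dirac a i))
  + dirac b j * (dirac a i - dirac b i).

Lemma transform_swap g a b f i :
  transform (swap_mx g a b) f i =
  f i + g b / g a * (dirac b i - dirac a i) * f a + (dirac a i - dirac b i) * f b.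
Proof.
set c := g b / g a * (dirac b i - dirac a i).
have e j : swap_mx g a b i j * f j =
    dirac i j * f j + c * (dirac a j * f j) + (dirac a i - dirac b i) * (dirac b j * f j).
  by rewrite /swap_mx -/c diracC; ring.
rewrite /transform (eq_bigr _ (fun j _ => e j)) !big_split /= -!mulr_sumr.
by rewrite !sum_dirac_mull.
Qed.

Lemma swap_gibbs_preserving g a b : a != b -> 0 < g a -> 0 <= g b <= g a ->
  gibbs_preserving g (swap_mx g a b).
Proof.
move=> hab ha /andP[hb0 hgba].
have hba : b != a by rewrite eq_sym.
have hr : 0 <= g b / g a <= 1.
  by rewrite divr_ge0 ?(ltW ha) //= ler_pdivrMr // mul1r.
split; [split|].
- move=> i j; rewrite /swap_mx.
  have [->|hja] := eqVneq j a.
    rewrite dirac_id (dirac_neq hab) mul1r mul0r addr0.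
    have [->|hia] := eqVneq i a; first by rewrite dirac_id (dirac_neq hab); lra.
    have [->|hib] := eqVneq i b; first by rewrite dirac_id (dirac_neq hba); lra.
    by rewrite !dirac_neq //; lra.
  rewrite (dirac_neq hja) mul0r addr0.
  have [->|hjb] := eqVneq j b; last by rewrite (dirac_neq hjb) mul0r addr0 dirac_ge0.
  by rewrite dirac_id mul1r addrCA subrr addr0 dirac_ge0.
- move=> j; rewrite !big_split /= -!mulr_sumr !sumrB !sum_dirac; ring.
- move=> i; rewrite transform_swap; field; exact: lt0r_neq0.
Qed.

Lemma transform_relax_at g a b f : a != b ->
  transform (relax_mx g a b) f b = f a + (g b - g a) / (1 - g a) * (\sum_j f j - f a).
Proof. by move=> hab; rewrite transform_relax dirac_id mul1r mulr1. Qed.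

Lemma transform_swap_at g a b f : a != b ->
  transform (swap_mx g a b) f b = g b / g a * f a.
Proof.
move=> hab; rewrite transform_swap dirac_id dirac_neq 1?eq_sym //; ring.
Qed.

Lemma gibbs_normaliser_gt0 beta (E : 'I_d -> R) : 0 < \sum_i expR (- (beta * E i)).
Proof.
rewrite (bigD1 ord0) //=; apply: ltr_wpDr; last exact: expR_gt0.
by apply: sumr_ge0 => j _; apply/ltW/expR_gt0.
Qed.

Lemma gibbs_gt0 beta (E : 'I_d -> R) i : 0 < gibbs beta E i.
Proof. by rewrite /gibbs divr_gt0 ?expR_gt0 ?gibbs_normaliser_gt0. Qed.

Lemma sum_gibbs beta (E : 'I_d -> R) : \sum_i gibbs beta E i = 1.
Proof. by rewrite /gibbs -mulr_suml divff // gt_eqF ?gibbs_normaliser_gt0. Qed.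

Lemma gibbs_anti beta (E : 'I_d -> R) i j : 0 <= beta -> E i <= E j ->
  gibbs beta E j <= gibbs beta E i.
Proof.
move=> hb hE; rewrite /gibbs ler_pM2r ?invr_gt0 ?gibbs_normaliser_gt0 //.
by rewrite ler_expR lerN2 ler_wpM2l.
Qed.

Lemma dist_lt1 {g a b} : a != b -> (forall i, 0 < g i) -> \sum_i g i = 1 -> g a < 1.
Proof.
move=> hab hg <-; rewrite (bigD1 a) //= ltrDl (bigD1 b) 1?eq_sym //=.
by apply: ltr_wpDr (hg b); apply: sumr_ge0 => i _; apply/ltW.
Qed.

Section Protocol.
Context {g G : 'I_d -> R} {a b : 'I_d}.
Hypotheses (hab : a != b) (hg : forall i, 0 < g i) (hG : forall i, 0 < G i).
Hypotheses (hgs : \sum_i g i = 1) (hGs : \sum_i G i = 1).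
Hypotheses (hgab : g a <= g b) (hGab : G a <= G b).

Let hba : b != a. Proof. by rewrite eq_sym. Qed.

Let relax_preserving : gibbs_preserving g (relax_mx g a b).
Proof.
apply: relax_gibbs_preserving => // [i|]; first exact: ltW.
exact: dist_lt1 hab hg hgs.
Qed.

Let swap_preserving : gibbs_preserving G (swap_mx G b a).
Proof. by apply: swap_gibbs_preserving; rewrite ?(ltW (hG a)). Qed.

Lemma relax_then_swap p : prob_dist p -> exists p' p'',
  [/\ prob_dist p', prob_dist p'', thermomaj g p p' & thermomaj G p' p''] /\
  p'' a = (1 - g b) * G a / ((1 - g a) * G b) * p a
          + (g b - g a) * G a / ((1 - g a) * G b).
Proof.
move=> hp; pose p' := transform (relax_mx g a b) p.
have hp' : prob_dist p' := stochastic_prob_dist relax_preserving.1 hp.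
exists p', (transform (swap_mx G b a) p'); split.
  split; [by [] | exact: stochastic_prob_dist swap_preserving.1 hp' | |];
  exact: gibbs_preserving_thermomaj.
rewrite transform_swap_at // /p' transform_relax_at // hp.2; field.
by rewrite !gt_eqF ?subr_gt0 ?(dist_lt1 hab hg hgs).
Qed.

Lemma swap_then_relax q : prob_dist q -> exists q' q'',
  [/\ prob_dist q', prob_dist q'', thermomaj G q q' & thermomaj g q' q''] /\
  q'' b = (1 - g b) * G a / ((1 - g a) * G b) * q b + (g b - g a) / (1 - g a).
Proof.
move=> hq; pose q' := transform (swap_mx G b a) q.
have hq' : prob_dist q' := stochastic_prob_dist swap_preserving.1 hq.
exists q', (transform (relax_mx g a b) q'); split.
  split; [by [] | exact: stochastic_prob_dist relax_preserving.1 hq' | |];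
  exact: gibbs_preserving_thermomaj.
rewrite transform_relax_at // hq'.2 /q' transform_swap_at //; field.
by rewrite !gt_eqF ?subr_gt0 ?(dist_lt1 hab hg hgs).
Qed.

End Protocol.

End Thermomajorisation.

(* [X / (D - Y)] is the fixed point of [x |-> (Y x + X) / D]; the positivity of
   [x] rules out [D <= Y], where the bound would be nonpositive. *)
Lemma le_affine_fixpoint (R : realFieldType) (D Y X x : R) :
  0 < D -> 0 <= Y -> 0 <= X -> 0 < x -> x <= X / (D - Y) ->
  x <= Y / D * x + X / D <= X / (D - Y).
Proof.
move=> hD hY hX hx hxf.
have hDY : 0 < D - Y.
  rewrite ltNge; apply/negP => hDY; move: (lt_le_trans hx hxf).
  by rewrite ltNge mulr_ge0_le0 // invr_le0.
move: hxf; rewrite ler_pdivlMr // => hxf.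
have -> : Y / D * x + X / D = (Y * x + X) / D by rewrite mulrDl mulrAC.
rewrite ler_pdivlMr // ler_pdivrMr // mulrAC ler_pdivlMr //.
by apply/andP; split; nra.
Qed.

Section FixpointBounds.
Variables (R : realFieldType) (ga gb Ga Gb : R).
Hypotheses (hgab : ga <= gb) (hgb : gb < 1).
Hypotheses (hGa : 0 <= Ga) (hGb : 0 < Gb).

Let den := Gb * (1 - ga) - Ga * (1 - gb).

Let hD : 0 < (1 - ga) * Gb.
Proof. by rewrite mulr_gt0 // subr_gt0; apply: le_lt_trans hgb. Qed.

Let eden : den = (1 - ga) * Gb - (1 - gb) * Ga.
Proof. by rewrite /den; ring. Qed.

Lemma le_relax_swap_fixpoint x : 0 < x -> x <= Ga * (gb - ga) / den ->
  x <= (1 - gb) * Ga / ((1 - ga) * Gb) * x + (gb - ga) * Ga / ((1 - ga) * Gb)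
    <= Ga * (gb - ga) / den.
Proof.
rewrite eden (mulrC Ga); apply: le_affine_fixpoint => //.
  by rewrite mulr_ge0 // subr_ge0 (ltW hgb).
by rewrite mulr_ge0 // subr_ge0.
Qed.

Lemma le_swap_relax_fixpoint x : 0 < x -> x <= Gb * (gb - ga) / den ->
  x <= (1 - gb) * Ga / ((1 - ga) * Gb) * x + (gb - ga) / (1 - ga)
    <= Gb * (gb - ga) / den.
Proof.
have -> : (gb - ga) / (1 - ga) = (gb - ga) * Gb / ((1 - ga) * Gb).
  by field; rewrite !gt_eqF // subr_gt0; apply: le_lt_trans hgb.
rewrite eden (mulrC Gb); apply: le_affine_fixpoint => //.
  by rewrite mulr_ge0 // subr_ge0 (ltW hgb).
by rewrite mulr_ge0 ?subr_ge0 ?(ltW hGb).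
Qed.

End FixpointBounds.

(* dimension d = n.+2 (i.e. d >= 2); index 1 is ord0, index d is ord_max *)
Theorem lemma3 (R : realType) (n : nat) (E : 'I_n.+2 -> R) (alpha beta : R)
  (hE : forall i j : 'I_n.+2, (i <= j)%N -> E i <= E j)
  (hab : beta < alpha) (hb : 0 <= beta)
  (p q : 'I_n.+2 -> R) (hp : prob_dist p) (hq : prob_dist q) :
  let g := gibbs alpha E in
  let G := gibbs beta E in
  let den := G ord0 * (1 - g ord_max) - G ord_max * (1 - g ord0) in
  let tg1 := G ord0 * (g ord0 - g ord_max) / den in
  let tGd := G ord_max * (g ord0 - g ord_max) / den in
  G ord_max <= p ord_max <= tGd ->
  g ord0 <= q ord0 <= tg1 ->
  exists p' p'' q' q'' : 'I_n.+2 -> R,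
    [/\ prob_dist p', prob_dist p'', prob_dist q' & prob_dist q''] /\
    [/\ thermomaj g p p', thermomaj G p' p'',
        thermomaj G q q' & thermomaj g q' q''] /\
    p'' ord_max = (1 - g ord0) * G ord_max / ((1 - g ord_max) * G ord0) * p ord_max
                  + (g ord0 - g ord_max) * G ord_max / ((1 - g ord_max) * G ord0) /\
    q'' ord0 = (1 - g ord0) * G ord_max / ((1 - g ord_max) * G ord0) * q ord0
               + (g ord0 - g ord_max) / (1 - g ord_max) /\
    p ord_max <= p'' ord_max <= tGd /\
    q ord0 <= q'' ord0 <= tg1.
Proof.
move=> g G den tg1 tGd /andP[hp1 hp2] /andP[hq1 hq2].
have hg i : 0 < g i by apply: gibbs_gt0.
have hG i : 0 < G i by apply: gibbs_gt0.
have hgs : \sum_i g i = 1 by apply: sum_gibbs.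
have hGs : \sum_i G i = 1 by apply: sum_gibbs.
have hmo : ord_max != ord0 :> 'I_n.+2 by [].
have hgo1 : g ord0 < 1 := @dist_lt1 _ _ g ord0 ord_max isT hg hgs.
have hgmo : g ord_max <= g ord0 by apply: gibbs_anti; [lra | apply: hE].
have hGmo : G ord_max <= G ord0 by apply: gibbs_anti; [lra | apply: hE].
have [p' [p'' [[hp' hp'' hpp' hpp''] ep'']]] :=
  relax_then_swap hmo hg hG hgs hGs hgmo hGmo p hp.
have [q' [q'' [[hq' hq'' hqq' hqq''] eq'']]] :=
  swap_then_relax hmo hg hG hgs hGs hgmo hGmo q hq.
exists p', p'', q', q''; do 4 (split => //); split.
  rewrite ep''; apply: le_relax_swap_fixpoint => //; first exact: ltW (hG _).
  exact: lt_le_trans hp1.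
rewrite eq''; apply: le_swap_relax_fixpoint => //; first exact: ltW (hG _).
exact: lt_le_trans hq1.
Qed.
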